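(* Let $R$ be a skew field. For $a_1,a_2,a_3,a_4\in R^*$ put $A_i=a_ia_{i+1}a_{i+2}a_{i+3}$ (indices mod $4$) and assume $1+A_i\neq0$ for all $i$. Define $\mu(a_1,a_2,a_3,a_4)=(b_1,b_2,b_3,b_4)$ by $$b_1=(1+A_3^{-1})a_3,\quad b_2=(1+A_4)^{-1}a_4,\quad b_3=(1+A_1^{-1})a_1,\quad b_4=(1+A_2)^{-1}a_2.$$ Then the square of this two by two transformation is the identity, in the sense that $\mu(b_2,b_3,b_4,b_1)=(a_2,a_3,a_4,a_1)$.
   Context: The transformation $\mu$ describes the change of $\mathcal A$-coordinates $a_i$ on the four internal edges of a bipartite ribbon graph under a two by two move; the relabeling $(b_2,b_3,b_4,b_1)$ corresponds to the rotation of the picture identifying the new graph with the old one. *)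

From mathcomp Require Import all_boot all_algebra.
Set Implicit Arguments. Unset Strict Implicit. Unset Printing Implicit Defensive.
Import GRing.Theory.
Local Open Scope ring_scope.

Definition skew_field (R : unitRingType) : Prop :=
  forall x : R, x != 0 -> x \is a GRing.unit.

Definition Aprod (R : unitRingType) (a1 a2 a3 a4 : R) : R := a1 * a2 * a3 * a4.

Definition mu (R : unitRingType) (a : R * R * R * R) : R * R * R * R :=
  let: (a1, a2, a3, a4) := a in
  let A1 := Aprod a1 a2 a3 a4 in
  let A2 := Aprod a2 a3 a4 a1 in
  let A3 := Aprod a3 a4 a1 a2 in
  let A4 := Aprod a4 a1 a2 a3 in
  ((1 + A3^-1) * a3, (1 + A4)^-1 * a4, (1 + A1^-1) * a1, (1 + A2)^-1 * a2).

(** The relabelled move undoes the first one because of the identity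
    [b_i b_(i+1) = (a_i a_(i+1))^-1] (indices mod 4), which follows from the
    push-through rules [x (1 + u x)^-1 = (1 + x u)^-1 x] and
    [x (1 + (u x)^-1) = (1 + (x u)^-1) x] together with
    [(1 + A^-1) (1 + A)^-1 = (1 + A)^-1 (1 + A^-1) = A^-1].  Consequently the
    cyclic products of the [b_i] are the inverses of those of the [a_i], and
    applying the move again undoes the factors [1 + A_i] and [1 + A_i^-1]. *)
From mathcomp Require Import all_boot all_algebra.
Import GRing.Theory.
Local Open Scope ring_scope.

Section UnitRingIdentities.
Variable R : unitRingType.
Implicit Types x u A : R.

Lemma add1Vr_mulVl A : A \is a GRing.unit -> 1 + A^-1 = A^-1 * (1 + A).
Proof. by move=> uA; rewrite mulrDr mulr1 mulVr // addrC. Qed.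

Lemma add1Vr_mulVr A : A \is a GRing.unit -> 1 + A^-1 = (1 + A) * A^-1.
Proof. by move=> uA; rewrite mulrDl mul1r mulrV // addrC. Qed.

Lemma unit_add1Vr A :
  A \is a GRing.unit -> 1 + A \is a GRing.unit -> 1 + A^-1 \is a GRing.unit.
Proof. by move=> uA u1A; rewrite add1Vr_mulVl // unitrMl // unitrV. Qed.

Lemma mul_add1Vr_inv1Dr A : A \is a GRing.unit -> 1 + A \is a GRing.unit ->
  (1 + A^-1) * (1 + A)^-1 = A^-1.
Proof. by move=> uA u1A; rewrite add1Vr_mulVl // mulrK. Qed.

Lemma mul_inv1Dr_add1Vr A : A \is a GRing.unit -> 1 + A \is a GRing.unit ->
  (1 + A)^-1 * (1 + A^-1) = A^-1.
Proof. by move=> uA u1A; rewrite add1Vr_mulVr // mulKr. Qed.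

Lemma push_inv1Dr x u : 1 + x * u \is a GRing.unit -> 1 + u * x \is a GRing.unit ->
  x * (1 + u * x)^-1 = (1 + x * u)^-1 * x.
Proof.
move=> uxu uux; apply: (mulIr uux).
have xux : x * (1 + u * x) = (1 + x * u) * x.
  by rewrite mulrDr mulrDl mulr1 mul1r mulrA.
by rewrite divrK // -mulrA xux mulKr.
Qed.

Lemma push_add1Vr x u : x \is a GRing.unit -> u \is a GRing.unit ->
  x * (1 + (u * x)^-1) = (1 + (x * u)^-1) * x.
Proof.
move=> ux uu; rewrite mulrDr mulrDl mulr1 mul1r !invrM //.
by rewrite mulrA mulrV // mul1r -mulrA mulVr // mulr1.
Qed.

End UnitRingIdentities.

Section AprodFacts.
Variable R : unitRingType.
Implicit Types x y z w : R.

Lemma AprodE x y z w : Aprod x y z w = x * y * (z * w).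
Proof. by rewrite /Aprod !mulrA. Qed.

Lemma AprodEl x y z w : Aprod x y z w = x * (y * z * w).
Proof. by rewrite /Aprod !mulrA. Qed.

End AprodFacts.

Section MoveProducts.
Variable R : unitRingType.
Variables x y z w : R.
Hypotheses (ux : x \is a GRing.unit) (uy : y \is a GRing.unit).
Hypotheses (uz : z \is a GRing.unit) (uw : w \is a GRing.unit).

Lemma unit_Aprod : Aprod x y z w \is a GRing.unit.
Proof. by rewrite /Aprod !unitrMl. Qed.

Lemma invAprod_mul2 : (Aprod x y z w)^-1 * x * y = (z * w)^-1.
Proof.
by rewrite AprodE invrM ?unitrMl // -!mulrA mulVr ?unitrMl // mulr1.
Qed.

Lemma invrM_Aprod : (z * w)^-1 * (x * y)^-1 = (Aprod x y z w)^-1.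
Proof. by rewrite AprodE [RHS]invrM ?unitrMl. Qed.

Hypotheses (u1P : 1 + Aprod x y z w \is a GRing.unit).
Hypotheses (u1Q : 1 + Aprod y z w x \is a GRing.unit).

Lemma mu_pair_add1V_inv1D :
  (1 + (Aprod x y z w)^-1) * x * ((1 + Aprod y z w x)^-1 * y) = (z * w)^-1.
Proof.
have push : x * (1 + Aprod y z w x)^-1 = (1 + Aprod x y z w)^-1 * x.
  by rewrite (@AprodEl _ x) /Aprod push_inv1Dr -?AprodEl.
rewrite mulrA -(mulrA _ x) push mulrA mul_add1Vr_inv1Dr ?unit_Aprod //.
exact: invAprod_mul2.
Qed.

Lemma mu_pair_inv1D_add1V :
  (1 + Aprod x y z w)^-1 * x * ((1 + (Aprod y z w x)^-1) * y) = (z * w)^-1.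
Proof.
have push : x * (1 + (Aprod y z w x)^-1) = (1 + (Aprod x y z w)^-1) * x.
  by rewrite (@AprodEl _ x) /Aprod push_add1Vr ?unitrMl.
rewrite mulrA -(mulrA _ x) push mulrA mul_inv1Dr_add1Vr ?unit_Aprod //.
exact: invAprod_mul2.
Qed.

End MoveProducts.

Lemma muE (R : unitRingType) (a1 a2 a3 a4 : R) :
  mu (a1, a2, a3, a4) =
  ((1 + (Aprod a3 a4 a1 a2)^-1) * a3, (1 + Aprod a4 a1 a2 a3)^-1 * a4,
   (1 + (Aprod a1 a2 a3 a4)^-1) * a1, (1 + Aprod a2 a3 a4 a1)^-1 * a2).
Proof. by []. Qed.

Theorem lemma4p3 (R : unitRingType) (hR : skew_field R) (a1 a2 a3 a4 : R) :
  a1 != 0 -> a2 != 0 -> a3 != 0 -> a4 != 0 ->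
  1 + Aprod a1 a2 a3 a4 != 0 ->
  1 + Aprod a2 a3 a4 a1 != 0 ->
  1 + Aprod a3 a4 a1 a2 != 0 ->
  1 + Aprod a4 a1 a2 a3 != 0 ->
  let: (b1, b2, b3, b4) := mu (a1, a2, a3, a4) in
  mu (b2, b3, b4, b1) = (a2, a3, a4, a1).
Proof.
move=> /hR u1 /hR u2 /hR u3 /hR u4 /hR v1 /hR v2 /hR v3 /hR v4.
rewrite muE; set b1 := _ * a3; set b2 := _ * a4; set b3 := _ * a1; set b4 := _ * a2.
have b12 : b1 * b2 = (a1 * a2)^-1 by apply: mu_pair_add1V_inv1D.
have b23 : b2 * b3 = (a2 * a3)^-1 by apply: mu_pair_inv1D_add1V.
have b34 : b3 * b4 = (a3 * a4)^-1 by apply: mu_pair_add1V_inv1D.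
have b41 : b4 * b1 = (a4 * a1)^-1 by apply: mu_pair_inv1D_add1V.
have B1 : Aprod b2 b3 b4 b1 = (Aprod a4 a1 a2 a3)^-1.
  by rewrite AprodE b23 b41 invrM_Aprod.
have B2 : Aprod b3 b4 b1 b2 = (Aprod a1 a2 a3 a4)^-1.
  by rewrite AprodE b34 b12 invrM_Aprod.
have B3 : Aprod b4 b1 b2 b3 = (Aprod a2 a3 a4 a1)^-1.
  by rewrite AprodE b41 b23 invrM_Aprod.
have B4 : Aprod b1 b2 b3 b4 = (Aprod a3 a4 a1 a2)^-1.
  by rewrite AprodE b12 b34 invrM_Aprod.
rewrite muE B1 B2 B3 B4 !invrK /b1 /b2 /b3 /b4 !mulVKr // !mulKr //;
  by apply: unit_add1Vr => //; apply: unit_Aprod.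
Qed.
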